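(* For every fixed integer $m\ge2$, the limit $\tau_m^{**}:=\lim_{n\to\infty}n^{m/2}\tau_{n,n-m}$ exists and $$\tau_m^{**}=2^{-m}\,|H_m(x_m')|,$$ where $H_m$ is the Hermite polynomial of degree $m$ (orthogonal with respect to $e^{-x^2}$ on $\mathbb{R}$, normalized with leading coefficient $2^m$) and $x_m'$ is the largest zero of $H_m'$, i.e. the point of the rightmost local extremum of $H_m$.
   Context: $T_n$ denotes the Chebyshev polynomial of the first kind of degree $n$, $T_n(\cos\theta)=\cos n\theta$. For integers $n\ge k+2$, $k\ge 1$, let $\omega_{n,k}$ be the rightmost (largest) zero of $T_n^{(k+1)}$ and define $\tau_{n,k}:=|T_n^{(k)}(\omega_{n,k})|/T_n^{(k)}(1)$. *)

From HB Require Import structures.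
From mathcomp Require Import all_boot all_order all_algebra.
From mathcomp Require Import all_classical all_reals all_analysis.
Set Implicit Arguments. Unset Strict Implicit. Unset Printing Implicit Defensive.
Import Order.TTheory GRing.Theory Num.Theory.
Local Open Scope ring_scope.
Local Open Scope classical_set_scope.

(* Chebyshev polynomials of the first kind: T_0 = 1, T_1 = X,
   T_{n+2} = 2 X T_{n+1} - T_n  (equivalently T_n(cos t) = cos (n t)). *)
Fixpoint cheb_pair (R : realType) (n : nat) : {poly R} * {poly R} :=
  match n with
  | 0 => (1, 'X)
  | n'.+1 => let: (a, b) := cheb_pair R n' in (b, 2%:P * 'X * b - a)
  end.
Definition chebT (R : realType) (n : nat) : {poly R} := (cheb_pair R n).1.

(* Physicists' Hermite polynomials: H_0 = 1, H_1 = 2X,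
   H_{m+2} = 2X H_{m+1} - 2(m+1) H_m  (leading coefficient 2^m,
   orthogonal w.r.t. exp(-x^2)). *)
Fixpoint herm_pair (R : realType) (m : nat) : {poly R} * {poly R} :=
  match m with
  | 0 => (1, 2%:P * 'X)
  | m'.+1 => let: (a, b) := herm_pair R m' in
             (b, 2%:P * 'X * b - (2 * m'.+1)%:R%:P * a)
  end.
Definition hermH (R : realType) (m : nat) : {poly R} := (herm_pair R m).1.

Definition largest_root (R : realType) (p : {poly R}) : R :=
  sup [set x : R | root p x].

Definition omega (R : realType) (n k : nat) : R :=
  largest_root ((chebT R n)^`(k.+1)).

Definition tau (R : realType) (n k : nat) : R :=
  `|((chebT R n)^`(k)).[omega R n k]| / ((chebT R n)^`(k)).[1].

(* Let u_n = T_n^(n-m), a polynomial of degree m with leading coefficient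
   K_n = 2^(n-1) n!/m!.  The explicit coefficients of T_n show that the rescaled
   polynomials Q_n(t) = n^(m/2) u_n(t / sqrt n) / K_n converge coefficientwise to
   the monic Hermite polynomial 2^(-m) H_m.  Hence u_n(1) / K_n = n^(-m/2) Q_n(sqrt n)
   tends to the leading coefficient 1.  The largest zero of Q_n' is sqrt n * omega_(n,n-m),
   and it converges to the largest zero x'_m of H_m': to the right of x'_m + e the
   polynomials Q_n' are eventually positive (their leading coefficient dominates far
   out, and they are uniformly close to H_m' on compacts), while just to the left of
   x'_m the polynomial H_m' is negative, hence so is Q_n' eventually.  Therefore
   n^(m/2) tau_(n,n-m) = |Q_n(sqrt n * omega_(n,n-m))| / (u_n(1) / K_n) tends to
   2^(-m) |H_m(x'_m)|. *)

From HB Require Import structures.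
From mathcomp Require Import all_boot all_order all_algebra.
From mathcomp Require Import all_classical all_reals all_analysis.
From mathcomp Require Import polyrcf zify ring lra.
Import Order.TTheory GRing.Theory Num.Theory numFieldNormedType.Exports.
Set Implicit Arguments.
Unset Strict Implicit.
Unset Printing Implicit Defensive.
Local Open Scope classical_set_scope.
Local Open Scope ring_scope.

Section ChebyshevHermiteCoefficients.
Variable R : realType.
Local Notation T := (chebT R).
Local Notation H := (hermH R).

Lemma fact_neq0 n : (n`!%:R : R) != 0.
Proof. by rewrite pnatr_eq0 -lt0n fact_gt0. Qed.

Lemma coef2XM (p : {poly R}) i :
  (2%:P * 'X * p)`_i = if i is i'.+1 then 2 * p`_i' else 0.
Proof. by rewrite -mulrA (mulrC 'X) coefCM coefMX; case: i => [|i] //=; rewrite mulr0. Qed.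

Lemma chebTSS n : T n.+2 = 2%:P * 'X * T n.+1 - T n.
Proof. by rewrite /chebT /=; case: (cheb_pair R n). Qed.

Lemma coef_chebTSS n i :
  (T n.+2)`_i = (if i is i'.+1 then 2 * (T n.+1)`_i' else 0) - (T n)`_i.
Proof. by rewrite chebTSS coefB coef2XM. Qed.

Lemma coef_chebT_gt n i : (n < i)%N -> (T n)`_i = 0.
Proof.
elim/ltn_ind: n i => -[|[|n]] IH i ni.
- by rewrite coef1; case: i ni.
- by rewrite coefX; case: i ni => // -[].
rewrite coef_chebTSS; case: i ni => // i ni.
by rewrite !IH ?mulr0 ?subr0 //; lia.
Qed.

Lemma coef_chebT_odd n i : odd (n + i) -> (T n)`_i = 0.
Proof.
elim/ltn_ind: n i => -[|[|n]] IH i.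
- by rewrite coef1; case: i.
- by rewrite coefX; case: i => // -[].
rewrite coef_chebTSS; case: i => [|i] /=; rewrite ?addn0 ?addSn ?addnS /= negbK => oi.
  by rewrite IH ?addn0 ?subr0.
by rewrite !IH ?mulr0 ?subr0 ?addSn ?addnS //= negbK.
Qed.

Lemma coef_chebT_lead n : (T n.+1)`_n.+1 = 2 ^+ n.
Proof.
elim: n => [|n IH]; first by rewrite coefX.
by rewrite coef_chebTSS IH coef_chebT_gt // subr0 exprS.
Qed.

Definition chebT_coef (i j : nat) : R :=
  if i is i'.+1 then
    (-1) ^+ j * 2 ^+ i' * (i + 2 * j)%:R * (i' + j)`!%:R / (j`!%:R * i`!%:R)
  else (-1) ^+ j.

Lemma chebT_coefS i j : chebT_coef i.+1 j =
  (-1) ^+ j * 2 ^+ i * (i.+1 + 2 * j)%:R * (i + j)`!%:R / (j`!%:R * i.+1`!%:R).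
Proof. by []. Qed.

Lemma chebT_coefSS i j :
  chebT_coef i.+1 j.+1 = 2 * chebT_coef i j.+1 - chebT_coef i.+1 j.
Proof.
case: i => [|i]; rewrite /= !mulnS !addSn !addnS !factS !natrM !exprS.
  all: rewrite ?natrD ?natrM ?add0n ?expr0 ?fact0 ?mul1r.
all: by field; rewrite ?fact_neq0 ?nat1r -?natrD ?pnatr_eq0 ?addn_eq0.
Qed.

Lemma coef_chebT i j : (T (i + 2 * j))`_i = chebT_coef i j.
Proof.
elim: i j => [|i IHi] j.
  rewrite /chebT_coef add0n; elim: j => [|j IHj]; first by rewrite coef1.
  by rewrite mulnS coef_chebTSS IHj add0r exprS mulN1r.
elim: j => [|j IHj].
  rewrite muln0 addn0 coef_chebT_lead /chebT_coef muln0 !addn0 expr0 mul1r fact0.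
  rewrite mul1r factS natrM; field.
  by rewrite ?fact_neq0 ?nat1r -?natrD ?pnatr_eq0 ?addn_eq0.
rewrite chebT_coefSS -IHj -IHi (_ : (i.+1 + 2 * j.+1 = (i.+1 + 2 * j).+2)%N); last by lia.
by rewrite coef_chebTSS (_ : ((i.+1 + 2 * j).+1 = i + 2 * j.+1)%N) //; lia.
Qed.

Lemma coef_derivn_chebT i j k :
  ((T (i + 2 * j + k.+1))^`(k.+1))`_i =
  (-1) ^+ j * 2 ^+ (i + k) * (i + 2 * j + k.+1)%:R * (i + j + k)`!%:R / (j`!%:R * i`!%:R).
Proof.
rewrite coef_derivn (_ : (i + 2 * j + k.+1 = (k.+1 + i) + 2 * j)%N); last by lia.
rewrite coef_chebT addSn chebT_coefS -(mulr_natr _ ((k + i).+1 ^_ k.+1)).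
have := ffact_fact (leq_addr i k.+1); rewrite addKn addSn.
move=> /(congr1 (GRing.natmul (1 : R))); rewrite natrM => ffactE.
have -> : ((k + i).+1 ^_ k.+1)%:R = ((k + i).+1)`!%:R / i`!%:R :> R.
  by rewrite -ffactE mulfK ?fact_neq0.
rewrite (addnC k i) (_ : (i + k + j = i + j + k)%N); last by lia.
by field; rewrite !fact_neq0.
Qed.

Lemma hermHSS n : H n.+2 = 2%:P * 'X * H n.+1 - (2 * n.+1)%:R%:P * H n.
Proof. by rewrite /hermH /=; case: (herm_pair R n). Qed.

Lemma coef_hermHSS n i : (H n.+2)`_i =
  (if i is i'.+1 then 2 * (H n.+1)`_i' else 0) - (2 * n.+1)%:R * (H n)`_i.
Proof. by rewrite hermHSS coefB coef2XM coefCM. Qed.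

Lemma coef_hermH_gt n i : (n < i)%N -> (H n)`_i = 0.
Proof.
elim/ltn_ind: n i => -[|[|n]] IH i ni.
- by rewrite coef1; case: i ni.
- by rewrite coefCM coefX; case: i ni => [|[|i]] //; rewrite mulr0.
rewrite coef_hermHSS; case: i ni => [|i] ni; first by [].
by rewrite !IH ?mulr0 ?subr0 //; lia.
Qed.

Lemma coef_hermH_odd n i : odd (n + i) -> (H n)`_i = 0.
Proof.
elim/ltn_ind: n i => -[|[|n]] IH i.
- by rewrite coef1; case: i.
- by rewrite coefCM coefX; case: i => [|[|i]] //; rewrite mulr0.
rewrite coef_hermHSS; case: i => [|i] /=; rewrite ?addn0 ?addSn ?addnS /= negbK => oi.
  by rewrite IH ?addn0 ?mulr0 ?subr0.
by rewrite !IH ?mulr0 ?subr0 ?addSn ?addnS //= negbK.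
Qed.

Lemma coef_hermH_lead n : (H n)`_n = 2 ^+ n.
Proof.
elim/ltn_ind: n => -[|[|n]] IH.
- by rewrite coef1.
- by rewrite coefCM coefX mulr1.
by rewrite coef_hermHSS IH // coef_hermH_gt ?mulr0 ?subr0 ?exprS.
Qed.

Definition hermH_coef (i j : nat) : R :=
  (-1) ^+ j * 2 ^+ i * (i + 2 * j)`!%:R / (j`!%:R * i`!%:R).

Lemma hermH_coefSS i j : hermH_coef i.+1 j.+1 =
  2 * hermH_coef i j.+1 - (2 * (i.+1 + 2 * j).+1)%:R * hermH_coef i.+1 j.
Proof.
rewrite /hermH_coef (_ : (i.+1 + 2 * j.+1 = (i + 2 * j).+3)%N); last by lia.
rewrite (_ : (i + 2 * j.+1 = (i + 2 * j).+2)%N); last by lia.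
rewrite (_ : (i.+1 + 2 * j = (i + 2 * j).+1)%N); last by lia.
rewrite !factS !natrM !exprS; field.
by rewrite ?fact_neq0 ?nat1r -?natrD ?pnatr_eq0 ?addn_eq0.
Qed.

Lemma hermH_coef0S j : hermH_coef 0 j.+1 = - (2 * (2 * j).+1)%:R * hermH_coef 0 j.
Proof.
rewrite /hermH_coef !add0n (_ : (2 * j.+1 = (2 * j).+2)%N); last by lia.
rewrite !factS !natrM !exprS; field.
by rewrite ?fact_neq0 ?nat1r -?natrD ?pnatr_eq0 ?addn_eq0.
Qed.

Lemma coef_hermH i j : (H (i + 2 * j))`_i = hermH_coef i j.
Proof.
elim: i j => [|i IHi] j.
  rewrite add0n; elim: j => [|j IHj].
    by rewrite coef1 /hermH_coef /= !mul1r invr1.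
  by rewrite mulnS coef_hermHSS IHj add0r hermH_coef0S mulNr.
elim: j => [|j IHj].
  rewrite muln0 addn0 coef_hermH_lead /hermH_coef muln0 addn0 expr0 mul1r fact0.
  by rewrite mul1r mulfK ?fact_neq0.
rewrite hermH_coefSS -IHj -IHi (_ : (i.+1 + 2 * j.+1 = (i.+1 + 2 * j).+2)%N); last by lia.
by rewrite coef_hermHSS (_ : ((i.+1 + 2 * j).+1 = i + 2 * j.+1)%N) //; lia.
Qed.

Lemma size_hermH n : size (H n) = n.+1.
Proof.
apply/anti_leq/andP; split; first by apply/leq_sizeP => j; apply: coef_hermH_gt.
rewrite ltnNge; apply/leq_sizeP => /(_ n (leqnn n))/eqP.
by rewrite coef_hermH_lead expf_eq0 pnatr_eq0 andbF.
Qed.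

Lemma lead_coef_hermH n : lead_coef (H n) = 2 ^+ n.
Proof. by rewrite lead_coefE size_hermH coef_hermH_lead. Qed.

Lemma hermH_deriv n : (H n.+1)^`() = (2 * n.+1)%:R *: H n.
Proof.
rewrite -mul_polyC; elim/ltn_ind: n => -[|[|n]] IH.
- by rewrite /hermH /= derivM derivC derivX !polyC_natr; ring.
- by rewrite hermHSS /hermH /= derivB !derivM !derivC derivX !polyC_natr; ring.
rewrite hermHSS derivB !derivM !derivC derivX IH // IH // [H n.+2]hermHSS.
by rewrite !polyC_natr; ring.
Qed.

End ChebyshevHermiteCoefficients.

Section LargestRoot.
Variable R : realType.
Implicit Types (p : {poly R}) (a b c t x : R).

Lemma has_sup_roots p x : p != 0 -> root p x -> has_sup [set t | root p t].
Proof.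
move=> p0 rx; split; first by exists x.
exists (cauchy_bound p) => t /= rt; rewrite leNgt; apply/negP => /ltW ct.
by have := ge_cauchy_bound p0; move=> /(_ t); rewrite in_itv /= ct rt => /(_ isT).
Qed.

Lemma largest_root_ge p x : p != 0 -> root p x -> x <= largest_root p.
Proof. by move=> p0 rx; apply: (sup_upper_bound (has_sup_roots p0 rx)). Qed.

Lemma largest_root_le p x b :
  root p x -> (forall t, root p t -> t <= b) -> largest_root p <= b.
Proof. by move=> rx ub; apply: ge_sup => //; exists x. Qed.

Lemma root_largest_root p x : p != 0 -> root p x -> root p (largest_root p).
Proof.
move=> p0 rx; have hs := has_sup_roots p0 rx.
apply/negPn/negP => nr.
have e0 : 0 < `|p.[largest_root p]| by rewrite normr_gt0.
have [d d0 hd] := poly_cont (largest_root p) p e0.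
have [y ry dy] := sup_adherent d0 hs.
have yL : y <= largest_root p by apply: largest_root_ge.
suff /hd : `|y - largest_root p| < d by rewrite (eqP ry) sub0r normrN ltxx.
by rewrite ler0_norm ?subr_le0 // opprB; move: dy; rewrite /largest_root; lra.
Qed.

Lemma no_root_gt_largest_root p t : p != 0 -> largest_root p < t -> ~~ root p t.
Proof. by move=> p0 Lt; apply/negP => /(largest_root_ge p0); rewrite leNgt Lt. Qed.

Lemma exists_root_ge p t :
  0 < lead_coef p -> p.[t] <= 0 -> exists2 y, t <= y & root p y.
Proof.
move=> lc pt; have [B hB] := poly_pinfty_gt_lc lc.
have tB : t <= Num.max t B by rewrite le_max lexx.
have ptB : p.[t] <= 0 <= p.[Num.max t B].
  by rewrite pt /=; apply: le_trans (ltW lc) (hB _ _); rewrite le_max lexx orbT.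
by have [y /andP[ty _] ry] := poly_ivt tB ptB; exists y.
Qed.

Lemma horner_gt0_gt_largest_root p t :
  0 < lead_coef p -> largest_root p < t -> 0 < p.[t].
Proof.
move=> lc Lt; rewrite ltNge; apply/negP => /(exists_root_ge lc) [y ty].
have p0 : p != 0 by rewrite -lead_coef_eq0 gt_eqF.
by apply/negP/no_root_gt_largest_root/(lt_le_trans Lt).
Qed.

Lemma largest_rootE p r :
  root p r -> (forall t, r < t -> ~~ root p t) -> largest_root p = r.
Proof.
move=> rr nr; have p0 : p != 0.
  have /nr : r < r + 1 by rewrite ltrDl.
  by apply: contraNneq => ->; rewrite root0.
apply/le_anti/andP; split; last exact: largest_root_ge.
by apply: largest_root_le rr _ => t rt; rewrite leNgt; apply/negP => /nr; rewrite rt.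
Qed.

Lemma root_scale_comp p c a t :
  c != 0 -> root (c *: (p \Po (a *: 'X))) t = root p (a * t).
Proof.
by move=> c0; rewrite /root hornerZ horner_comp hornerZ hornerX mulf_eq0 (negbTE c0).
Qed.

Lemma largest_root_scale_comp p c a : c != 0 -> 0 < a ->
  largest_root (c *: (p \Po (a *: 'X))) = a^-1 * largest_root p.
Proof.
(* If p = 0 or p has no real root, both sides are [sup] of a set without a
   supremum, which is 0 by convention. *)
move=> c0 a0; have [->|p0] := eqVneq p 0.
  rewrite comp_poly0 scaler0; suff -> : largest_root (0 : {poly R}) = 0 by rewrite mulr0.
  by apply: sup_out => -[_ [b ub]]; have := ub (b + 1); rewrite /= root0 => /(_ isT); lra.
have [[x rx]|nox] := pselect (exists x, root p x).
  apply: largest_rootE => [|t].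
    by rewrite root_scale_comp // mulrA divff ?gt_eqF // mul1r (root_largest_root p0 rx).
  rewrite root_scale_comp // -(ltr_pM2l a0) mulrA divff ?gt_eqF // mul1r.
  exact: no_root_gt_largest_root.
rewrite /largest_root; have -> : [set t | root p t] = set0.
  by apply/seteqP; split => // t rt; apply: nox; exists t.
have -> : [set t | root (c *: (p \Po (a *: 'X))) t] = set0.
  apply/seteqP; split => // t; rewrite /= root_scale_comp // => rt.
  by apply: nox; exists (a * t).
by rewrite sup0 mulr0.
Qed.

End LargestRoot.

Section HermiteRoots.
Variable R : realType.
Local Notation H := (hermH R).

Lemma lead_coef_hermH_gt0 n : 0 < lead_coef (H n).
Proof. by rewrite lead_coef_hermH exprn_gt0. Qed.

Lemma hermH_largest_root_interlace k : exists r r', [/\ r' < r, root (H k.+1) r,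
  forall t, r < t -> 0 < (H k.+1).[t] & forall t, r' < t -> 0 < (H k).[t]].
Proof.
elim: k => [|k [r [r' [r'r rr pos1 pos0]]]].
  exists 0, (-1); split; first exact: ltrN10.
  - by rewrite /root /hermH /= !hornerE.
  - by move=> t t0; rewrite /hermH /= !hornerE mulr_gt0.
  - by move=> t _; rewrite /hermH /= hornerE.
have neg : (H k.+2).[r] < 0. (* by the recurrence, H_(k+2)(r) = -2(k+1) H_k(r) *)
  rewrite hermHSS !hornerE (eqP rr) mulr0 add0r oppr_lt0.
  by rewrite mulr_gt0 ?ltr0n ?pos0.
have [y ry Hy] := exists_root_ge (lead_coef_hermH_gt0 k.+2) (ltW neg).
have Hk2 : H k.+2 != 0 by rewrite -size_poly_eq0 size_hermH.
exists (largest_root (H k.+2)), r; split.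
- apply: lt_le_trans (largest_root_ge Hk2 Hy); rewrite lt_neqAle ry andbT.
  by apply: contraTneq Hy => <-; rewrite /root lt_eqF.
- exact: root_largest_root Hy.
- by move=> t; apply: horner_gt0_gt_largest_root (lead_coef_hermH_gt0 _).
- exact: pos1.
Qed.

Lemma hermH_sign_change k : exists r r', [/\ r' < r, root (H k.+1) r,
  forall t, r < t -> 0 < (H k.+1).[t] & forall t, r' < t < r -> (H k.+1).[t] < 0].
Proof.
have [r [r' [r'r rr pos1 pos0]]] := hermH_largest_root_interlace k.
exists r, r'; split => // t /andP[r't tr].
have [c /andP[tc cr] mvt] := poly_mvt (H k.+1) tr.
have : 0 < ((H k.+1)^`()).[c] * (r - t).
  by rewrite hermH_deriv hornerZ !mulr_gt0 ?subr_gt0 ?pos0 // (lt_trans r't tc).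
by rewrite -mvt (eqP rr) sub0r oppr_gt0.
Qed.

End HermiteRoots.

Lemma coef_comp_scaleX (R : comNzRingType) (p : {poly R}) c i :
  (p \Po (c *: 'X))`_i = c ^+ i * p`_i.
Proof.
rewrite comp_polyE coef_sum.
under eq_bigr do rewrite exprZn coefZ coefZ coefXn.
have [ip|pi] := ltnP i (size p); last first.
  rewrite nth_default // mulr0 big1 // => k _.
  by rewrite eqn_leq leqNgt (leq_trans (ltn_ord k) pi) !mulr0.
rewrite (bigD1 (Ordinal ip)) //= eqxx mulr1 mulrC big1 ?addr0 // => k ki.
rewrite (_ : (i == k) = false) ?mulr0 //; apply/negbTE; rewrite eq_sym.
by apply: contraNneq ki => ki; apply/eqP/val_inj.
Qed.

Section HornerBounds.
Variable R : realDomainType.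
Implicit Types (p : {poly R}) (t C : R).

Lemma norm_horner_le p D C t : (size p <= D)%N -> `|t| <= C ->
  `|p.[t]| <= \sum_(i < D) `|p`_i| * C ^+ i.
Proof.
move=> sp tC; rewrite (horner_coef_wide _ sp).
apply: le_trans (ler_norm_sum _ _ _) _; apply: ler_sum => i _.
rewrite normrM normrX ler_wpM2l // lerXn2r ?nnegrE //.
exact: le_trans tC.
Qed.

Lemma horner_gt0_lead_dominates p d t : (size p <= d.+1)%N -> 1 <= t ->
  \sum_(i < d) `|p`_i| < t * p`_d -> 0 < p.[t].
Proof.
move=> sp t1 dom; have t0 : 0 < t by apply: lt_le_trans t1.
rewrite (horner_coef_wide _ sp) big_ord_recr /=.
set S := \sum_(i < d) _.
have tS : t * - S <= (\sum_(i < d) `|p`_i|) * t ^+ d.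
  rewrite -sumrN mulr_sumr mulr_suml; apply: ler_sum => i _.
  rewrite mulrN mulrCA -exprS -mulNr.
  apply: (@le_trans _ _ (`|p`_i| * t ^+ i.+1)).
    by rewrite ler_pM2r ?exprn_gt0 // -(normrN p`_i) ler_norm.
  by apply: ler_wpM2l => //; rewrite ler_weXn2l.
have : t * - S < t * (p`_d * t ^+ d).
  by apply: le_lt_trans tS _; rewrite mulrA ltr_pM2r ?exprn_gt0.
by rewrite ltr_pM2l //; lra.
Qed.

End HornerBounds.

Lemma cvg_near_eq {T : Type} {U : topologicalType} (F : set_system T) {FF : Filter F}
    (f g : T -> U) (l : U) :
  (\forall x \near F, g x = f x) -> g @ F --> l -> f @ F --> l.
Proof. by move=> fg; apply: cvg_trans; exact: near_eq_cvg. Qed.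

Section CoefficientwiseConvergence.
Context {R : realType} {T : Type} (F : set_system T) {FF : Filter F}.
Variables (ps : T -> {poly R}) (P : {poly R}) (d : nat).
Hypothesis size_ps : forall x, (size (ps x) <= d.+1)%N.
Hypothesis size_P : (size P <= d.+1)%N.
Hypothesis cvg_coef : forall i, (ps x)`_i @[x --> F] --> P`_i.

Lemma cvg_horner (t : T -> R) t0 : t @ F --> t0 -> (ps x).[t x] @[x --> F] --> P.[t0].
Proof.
move=> ct; under eq_cvg do rewrite (horner_coef_wide _ (size_ps _)).
rewrite (horner_coef_wide _ size_P); apply: cvg_big => [|i _]; first exact: add_continuous.
apply: cvgM; first exact: cvg_coef.
exact: (continuous_cvg _ (@exprn_continuous R i t0) ct).
Qed.

Lemma near_horner_close C e : 0 < e ->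
  \forall x \near F, forall t, `|t| <= C -> `|(ps x).[t] - P.[t]| < e.
Proof.
move=> e0.
have err0 : \sum_(i < d.+1) `|(ps x)`_i - P`_i| * C ^+ i @[x --> F] --> (0 : R).
  have P0 : \sum_(i < d.+1) `|P`_i - P`_i| * C ^+ i = 0 :> R.
    by rewrite big1 // => i _; rewrite subrr normr0 mul0r.
  rewrite -[X in _ --> X]P0.
  apply: cvg_big => [|i _]; first exact: add_continuous.
  apply: cvgM; last exact: cvg_cst.
  by apply: cvg_norm; apply: cvgB; [exact: cvg_coef | exact: cvg_cst].
near=> x => t tC.
have sD : (size (ps x - P)%R <= d.+1)%N.
  by rewrite (leq_trans (size_polyD _ _)) // size_polyN geq_max size_ps size_P.
have := norm_horner_le sD tC; rewrite hornerD hornerN => /le_lt_trans; apply.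
under eq_bigr do rewrite coefB.
by near: x; exact: (cvgr_lt _ err0 _ e0).
Unshelve. all: by end_near.
Qed.

Lemma near_horner_gt0 a : 0 < P`_d -> (forall t, a <= t -> 0 < P.[t]) ->
  \forall x \near F, forall t, a <= t -> 0 < (ps x).[t].
Proof.
(* On [a, A] the polynomials ps x are uniformly close to P, whose minimum there is
   positive; beyond A, the leading coefficient dominates. *)
move=> Pd0 Ppos; set S := \sum_(i < d) `|P`_i|.
set A := Num.max (Num.max 1 a) (2 * (S + 1) / P`_d + 1).
have A1 : 1 <= A by rewrite !le_max lexx.
have aA : a <= A by rewrite !le_max lexx !orbT.
have AS : 2 * (S + 1) / P`_d + 1 <= A by rewrite le_max lexx orbT.
have [t0 t0in minP] := EVT_min aA (continuous_subspaceT (@continuous_horner R P)).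
have Pt0 : 0 < P.[t0] by apply: Ppos; move: t0in; rewrite in_itv => /andP[].
have lead_near : \forall x \near F, P`_d / 2 < (ps x)`_d.
  by apply: (cvgr_gt _ (@cvg_coef d)); lra.
have tail_near : \forall x \near F, \sum_(i < d) `|(ps x)`_i| < S + 1.
  apply: (cvgr_lt S); last lra.
  by apply: cvg_big => [|i _]; [exact: add_continuous | exact: cvg_norm].
apply: filterS3 lead_near tail_near (near_horner_close (`|a| + A) Pt0).
move=> x lead tail close t ta.
have [tA|At] := leP t A.
  have tC : `|t| <= `|a| + A.
    have := ler_norm (- a); rewrite normrN => Na; have a0 := normr_ge0 a.
    by rewrite ler_norml; apply/andP; split; lra.
  have := minP t; rewrite in_itv /= ta tA => /(_ isT) Pt.
  have := close t tC; have := ler_norm (- ((ps x).[t] - P.[t])); rewrite normrN; lra.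
have tS : 2 * (S + 1) < t * P`_d by rewrite -ltr_pdivrMr //; lra.
apply: horner_gt0_lead_dominates (size_ps x) _ _; first lra.
apply: lt_le_trans (_ : t * (P`_d / 2) <= t * (ps x)`_d); first lra.
by rewrite ler_pM2l ?ltW //; lra.
Qed.

Lemma largest_root_cvg r r' : 0 < P`_d -> r' < r ->
  (forall t, r < t -> 0 < P.[t]) -> (forall t, r' < t < r -> P.[t] < 0) ->
  largest_root (ps x) @[x --> F] --> r.
Proof.
(* Eventually ps x is negative at t1 in (r - e, r) and positive on [r + e/2, +oo),
   which traps its largest root. *)
move=> Pd0 r'r Ppos Pneg; apply/cvgrPdist_lt => e e0.
set b := r + e / 2; set m := Num.min (e / 2) ((r - r') / 2).
have m0 : 0 < m by rewrite lt_min; apply/andP; split; lra.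
have me : m <= e / 2 by rewrite ge_min lexx.
have mr : m <= (r - r') / 2 by rewrite ge_min lexx orbT.
set t1 := r - m.
have pos_near := near_horner_gt0 Pd0 (fun t bt => Ppos t (lt_le_trans _ bt)).
have neg_near : \forall x \near F, (ps x).[t1] < 0.
  apply: (cvgr_lt _ (cvg_horner (cvg_cst t1))); apply: Pneg.
  by rewrite /t1; apply/andP; split; lra.
apply: filterS2 (pos_near b _) neg_near => [x pos neg|]; last by rewrite /b; lra.
have t1b : t1 <= b by rewrite /t1 /b; lra.
have sign : (ps x).[t1] <= 0 <= (ps x).[b] by rewrite ltW //= ltW // pos.
have [y /andP[t1y _] ry] := poly_ivt t1b sign.
have ps0 : ps x != 0 by apply: contraTneq (pos b (lexx b)) => ->; rewrite horner0 ltxx.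
have ub t : root (ps x) t -> t <= b.
  by move=> rt; rewrite leNgt; apply/negP => /ltW /pos; rewrite (eqP rt) ltxx.
have := largest_root_ge ps0 ry; have := largest_root_le ry ub.
move: t1y; rewrite /t1 /b ltr_norml => t1y Lb yL.
by apply/andP; split; lra.
Qed.

Lemma cvg_horner_div_lead (s : T -> R) :
  (s x)^-1 @[x --> F] --> 0 -> (\forall x \near F, s x != 0) ->
  (ps x).[s x] / s x ^+ d @[x --> F] --> P`_d.
Proof.
(* The quotient is the reversed polynomial of ps x evaluated at (s x)^-1. *)
move=> s0 sn0.
apply: (cvg_near_eq (g := fun x => \sum_(i < d.+1) (ps x)`_i * (s x)^-1 ^+ (d - i))).
  apply: filterS sn0 => x sx; rewrite (horner_coef_wide _ (size_ps x)) mulr_suml.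
  apply: eq_bigr => i _; have id : (i <= d)%N by rewrite -ltnS.
  have -> : s x ^+ d = s x ^+ (d - i) * s x ^+ i by rewrite -exprD subnK.
  by rewrite exprVn; field; rewrite !expf_neq0.
have -> : P`_d = \sum_(i < d.+1) P`_i * 0 ^+ (d - i).
  rewrite big_ord_recr /= subnn expr0 mulr1 big1 ?add0r // => i _.
  by rewrite expr0n subn_eq0 leqNgt ltn_ord mulr0.
apply: cvg_big => [|i _]; first exact: add_continuous.
by apply: cvgM; [exact: cvg_coef | exact: (continuous_cvg _ (@exprn_continuous R _ 0) s0)].
Qed.

End CoefficientwiseConvergence.

Lemma inv_natr_cvg0 (R : realType) : (n%:R : R)^-1 @[n --> \oo] --> 0.
Proof. by rewrite -cvg_shiftS /=; exact: cvg_harmonic. Qed.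

Lemma inv_sqrt_natr_cvg0 (R : realType) : (Num.sqrt (n%:R : R))^-1 @[n --> \oo] --> 0.
Proof.
apply: (cvg_near_eq (g := fun n => Num.sqrt ((n%:R : R)^-1))).
  by near=> n; rewrite sqrtrV.
rewrite -sqrtr0; apply: (continuous_cvg _ (@sqrt_continuous R 0)); exact: inv_natr_cvg0.
Unshelve. all: by end_near.
Qed.

Lemma ffact_div_expn_cvg1 (R : realType) j :
  ((n ^_ j)%:R / n%:R ^+ j : R) @[n --> \oo] --> (1 : R).
Proof.
elim: j => [|j IH].
  by under eq_cvg do rewrite ffactn0 expr0 divr1; exact: cvg_cst.
apply: (cvg_near_eq (g := fun n => (n ^_ j)%:R / n%:R ^+ j * (1 - j%:R * (n%:R)^-1) : R)).
  near=> n; have jn : (j <= n)%N by near: n; exact: nbhs_infty_ge.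
  have n0 : (n%:R : R) != 0 by rewrite pnatr_eq0 -lt0n; near: n; exact: nbhs_infty_gt.
  by rewrite ffactnSr natrM natrB // exprSr; field; rewrite n0 expf_neq0.
rewrite -[X in _ --> X]mulr1; apply: cvgM => //.
rewrite -[X in _ --> X]subr0; apply: cvgB; first exact: cvg_cst.
rewrite -(mulr0 (j%:R : R)); apply: cvgM; [exact: cvg_cst | exact: inv_natr_cvg0].
Unshelve. all: by end_near.
Qed.

Section ScaledChebyshevDerivative.
Variables (R : realType) (m : nat).
Local Notation T := (chebT R).
Local Notation H := (hermH R).
Local Notation sqrtn n := (Num.sqrt (n%:R : R)).

(* These are u_n, K_n and Q_n; for n >= m, K_n is the leading coefficient of u_n. *)
Definition dchebT n := (T n)^`(n - m).
Definition lead_dchebT n : R := 2 ^+ n.-1 * n`!%:R / m`!%:R.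
Definition scaled_dchebT n :=
  (sqrtn n ^+ m / lead_dchebT n) *: (dchebT n \Po ((sqrtn n)^-1 *: 'X)).
Definition hermH_monic := 2%:R ^- m *: H m.

Lemma sqrtn_gt0 n : (0 < n)%N -> 0 < sqrtn n.
Proof. by move=> n0; rewrite sqrtr_gt0 ltr0n. Qed.

Lemma lead_dchebT_gt0 n : 0 < lead_dchebT n.
Proof. by rewrite divr_gt0 ?mulr_gt0 ?exprn_gt0 ?ltr0n ?fact_gt0. Qed.

Lemma size_dchebT n : (size (dchebT n) <= m.+1)%N.
Proof. by apply/leq_sizeP => i mi; rewrite coef_derivn coef_chebT_gt ?mul0rn //; lia. Qed.

Lemma coef_scaled_dchebT n i : (scaled_dchebT n)`_i =
  sqrtn n ^+ m / lead_dchebT n * ((sqrtn n)^-1 ^+ i * (dchebT n)`_i).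
Proof. by rewrite coefZ coef_comp_scaleX. Qed.

Lemma size_scaled_dchebT n : (size (scaled_dchebT n) <= m.+1)%N.
Proof.
apply/leq_sizeP => i mi.
by rewrite coef_scaled_dchebT nth_default ?mulr0 // (leq_trans (size_dchebT n)).
Qed.

Lemma size_hermH_monic : (size hermH_monic <= m.+1)%N.
Proof. by rewrite (leq_trans (size_scale_leq _ _)) // size_hermH. Qed.

Lemma coef_scaled_dchebT_even i j n : m = (i + 2 * j)%N -> (m < n)%N ->
  (scaled_dchebT n)`_i = 2%:R ^- m * hermH_coef R i j / ((n ^_ j.+1)%:R / n%:R ^+ j.+1).
Proof.
move=> mij mn; have [k nE] : exists k, n = (i + 2 * j + k.+1)%N by exists (n - m).-1; lia.
have n0 : (n%:R : R) != 0 by rewrite pnatr_eq0; lia.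
have sn0 : sqrtn n != 0 by rewrite gt_eqF // sqrtn_gt0; lia.
have s0 : sqrtn n ^+ m != 0 by rewrite expf_neq0.
have sE : (sqrtn n)^-1 ^+ i = n%:R ^+ j / sqrtn n ^+ m.
  rewrite mij exprD exprVn exprM sqr_sqrtr ?ler0n //.
  by field; rewrite ?expf_neq0 ?sn0 ?n0.
have fE : (n`!%:R : R) = (n ^_ j.+1)%:R * (i + j + k)`!%:R.
  have jn : (j.+1 <= n)%N by lia.
  by rewrite -natrM -(ffact_fact jn) (_ : n - j.+1 = i + j + k)%N //; lia.
have uE : (dchebT n)`_i =
    (-1) ^+ j * 2 ^+ (i + k) * n%:R * (i + j + k)`!%:R / (j`!%:R * i`!%:R).
  by rewrite /dchebT (_ : n - m = k.+1)%N; [rewrite nE coef_derivn_chebT | lia].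
rewrite coef_scaled_dchebT uE sE /lead_dchebT fE /hermH_coef -mij.
rewrite (_ : n.-1 = (i + k) + 2 * j)%N; last by lia.
have -> : (2 : R) ^- m = (2 ^+ i * 2 ^+ (2 * j))^-1 by rewrite -exprD -mij.
rewrite [2 ^+ (_ + 2 * j)]exprD exprS.
have ffn0 : ((n ^_ j.+1)%:R : R) != 0 by rewrite pnatr_eq0 -lt0n ffact_gt0; lia.
by field; rewrite ?expf_neq0 ?n0 ?ffn0 ?fact_neq0 ?s0.
Qed.

Lemma coef_scaled_dchebT_odd i n : odd (m + i) -> (m <= n)%N -> (scaled_dchebT n)`_i = 0.
Proof.
move=> omi mn; rewrite coef_scaled_dchebT /dchebT coef_derivn.
rewrite coef_chebT_odd ?mul0rn ?mulr0 //.
have -> : (n + (n - m + i) = (m + i) + (n - m).*2)%N by rewrite -addnn; lia.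
by rewrite oddD odd_double addbF.
Qed.

Lemma coef_scaled_dchebT_cvg i : (scaled_dchebT n)`_i @[n --> \oo] --> hermH_monic`_i.
Proof.
rewrite coefZ; have [mi|im] := ltnP m i.
  rewrite coef_hermH_gt // mulr0; apply: (cvg_near_eq (g := fun=> 0)); last exact: cvg_cst.
  by near=> n; rewrite nth_default // (leq_trans (size_scaled_dchebT n)).
have [omi|emi] := boolP (odd (m + i)).
  rewrite coef_hermH_odd // mulr0; apply: (cvg_near_eq (g := fun=> 0)); last exact: cvg_cst.
  by near=> n; rewrite coef_scaled_dchebT_odd //; near: n; exact: nbhs_infty_ge.
have [j mij] : exists j, m = (i + 2 * j)%N.
  have ev : ~~ odd (m - i).
    by move: emi; rewrite -{1}(subnK im) -addnA addnn oddD odd_double addbF.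
  exists (m - i)./2; have := odd_double_half (m - i); rewrite (negbTE ev) add0n -muln2; lia.
rewrite mij coef_hermH -mij.
apply: (cvg_near_eq
  (g := fun n => 2%:R ^- m * hermH_coef R i j / ((n ^_ j.+1)%:R / n%:R ^+ j.+1))).
  by near=> n; rewrite (coef_scaled_dchebT_even mij) //; near: n; exact: nbhs_infty_gt.
rewrite -[X in _ --> X]mulr1; apply: cvgM; first exact: cvg_cst.
rewrite -[X in _ --> X]invr1; apply: cvgV; [exact: oner_neq0 | exact: ffact_div_expn_cvg1].
Unshelve. all: by end_near.
Qed.

Lemma dchebT1_cvg : (dchebT n).[1] / lead_dchebT n @[n --> \oo] --> (1 : R).
Proof.
apply: (cvg_near_eq (g := fun n => (scaled_dchebT n).[sqrtn n] / sqrtn n ^+ m)).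
  near=> n; have sn0 : sqrtn n != 0.
    by rewrite gt_eqF // sqrtn_gt0 //; near: n; exact: nbhs_infty_gt.
  rewrite hornerZ horner_comp hornerZ hornerX mulVf //.
  by field; rewrite ?expf_neq0 // gt_eqF ?lead_dchebT_gt0.
have lead1 : hermH_monic`_m = 1 by rewrite coefZ coef_hermH_lead mulVf ?expf_neq0.
rewrite -[X in _ --> X]lead1.
apply: (cvg_horner_div_lead size_scaled_dchebT coef_scaled_dchebT_cvg).
  exact: inv_sqrt_natr_cvg0.
by near=> n; rewrite gt_eqF // sqrtn_gt0 //; near: n; exact: nbhs_infty_gt.
Unshelve. all: by end_near.
Qed.

Lemma deriv_scaled_dchebT n : (scaled_dchebT n)^`() =
  (sqrtn n ^+ m / lead_dchebT n / sqrtn n) *: ((dchebT n)^`() \Po ((sqrtn n)^-1 *: 'X)).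
Proof. by rewrite derivZ deriv_comp derivZ derivX -scalerAr mulr1 scalerA. Qed.

Lemma tau_scaledE n : (m < n)%N ->
  sqrtn n ^+ m * tau R n (n - m) =
  `|(scaled_dchebT n).[sqrtn n * omega R n (n - m)]| / ((dchebT n).[1] / lead_dchebT n).
Proof.
move=> mn; have sn0 : 0 < sqrtn n by rewrite sqrtn_gt0; lia.
rewrite hornerZ horner_comp hornerZ hornerX mulKf ?gt_eqF //.
rewrite normrM ger0_norm ?divr_ge0 ?exprn_ge0 ?ltW ?lead_dchebT_gt0 //.
rewrite /tau /omega derivnS -/(dchebT n).
(* If T_n^(n-m)(1) were 0, both sides would be 0 since x / 0 = 0. *)
have [->|u10] := eqVneq (dchebT n).[1] 0; first by rewrite !(mul0r, invr0, mulr0).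
by field; rewrite u10 gt_eqF ?lead_dchebT_gt0.
Qed.

Lemma sqrt_omega_cvg : (2 <= m)%N ->
  sqrtn n * omega R n (n - m) @[n --> \oo] --> largest_root (H m)^`().
Proof.
move=> m2; have [k mk] : exists k, m = k.+2 by exists (m - 2)%N; lia.
have [r [r' [r'r rr pos neg]]] := hermH_sign_change R k.
set c : R := 2%:R ^- m * (2 * k.+2)%:R.
have c0 : 0 < c by rewrite mulr_gt0 ?invr_gt0 ?exprn_gt0 ?ltr0n.
have dH : hermH_monic^`() = c *: H k.+1.
  by rewrite /c derivZ mk hermH_deriv scalerA.
have -> : largest_root (H m)^`() = r.
  rewrite mk hermH_deriv.
  apply: largest_rootE => [|t rt]; rewrite rootZ ?pnatr_eq0 ?muln_eq0 //.
  by rewrite /root gt_eqF ?pos.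
apply: (cvg_near_eq (g := fun n => largest_root (scaled_dchebT n)^`())).
  near=> n; have sn0 : 0 < sqrtn n by apply: sqrtn_gt0; near: n; exact: nbhs_infty_gt.
  rewrite deriv_scaled_dchebT largest_root_scale_comp ?invr_gt0 //.
  rewrite invrK /omega derivnS //.
  by rewrite gt_eqF // !divr_gt0 ?exprn_gt0 ?lead_dchebT_gt0.
apply: (largest_root_cvg (d := k.+1) (P := hermH_monic^`()) _ _ _ _ r'r).
- move=> n; apply/leq_sizeP => i ki; rewrite coef_deriv nth_default ?mul0rn //.
  by rewrite (leq_trans (size_scaled_dchebT n)) // mk.
- by rewrite dH (leq_trans (size_scale_leq _ _)) // size_hermH.
- move=> i; rewrite coef_deriv; under eq_cvg do rewrite coef_deriv.
  exact: cvgMn (@coef_scaled_dchebT_cvg i.+1).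
- by rewrite dH coefZ coef_hermH_lead mulr_gt0 ?exprn_gt0.
- by move=> t rt; rewrite dH hornerZ mulr_gt0 ?pos.
- by move=> t tr; rewrite dH hornerZ pmulr_rlt0 ?neg.
Unshelve. all: by end_near.
Qed.

End ScaledChebyshevDerivative.

Theorem lemma6p4 (R : realType) (m : nat) (hm : (2 <= m)%N) :
  (fun n : nat => Num.sqrt (n%:R : R) ^+ m * tau R n (n - m)%N) @ \oo
    --> (2%:R ^- m * `|(hermH R m).[largest_root (hermH R m)^`()]| : R).
Proof.
apply: (cvg_near_eq (g := fun n =>
  `|(scaled_dchebT R m n).[Num.sqrt (n%:R : R) * omega R n (n - m)]| /
  ((dchebT R m n).[1] / lead_dchebT R m n))).
  by near=> n; rewrite tau_scaledE //; near: n; exact: nbhs_infty_gt.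
have -> : 2%:R ^- m * `|(hermH R m).[largest_root (hermH R m)^`()]| =
    `|(hermH_monic R m).[largest_root (hermH R m)^`()]| / 1 :> R.
  by rewrite divr1 hornerZ normrM ger0_norm // invr_ge0 exprn_ge0.
apply: cvgM; last by apply: cvgV; [exact: oner_neq0 | exact: dchebT1_cvg].
apply: cvg_norm; apply: (cvg_horner (size_scaled_dchebT R m) (size_hermH_monic R m)
  (@coef_scaled_dchebT_cvg R m)).
exact: sqrt_omega_cvg.
Unshelve. all: by end_near.
Qed.
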